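(* Let $K$ be a twisted knot diagram with an even number of bars, and consider colorings of $K$ by the twisted biquandle $(\mathbb{Z}_{S(K)},\ a\ast b=a\circ b=a+1,\ f(a)=-a)$ (with $\mathbb{Z}_0=\mathbb{Z}$). For a coloring $F$ and a real crossing $c$ let $\mathrm{Ind}_F(c)=y-x\in\mathbb{Z}_{S(K)}$. Then: (i) if $c\in C_e(K)$, $\mathrm{Ind}_F(c)$ does not depend on the coloring $F$; (ii) if $c\in C_o(K)$, then as $F$ ranges over all colorings, the set of values $\{\mathrm{Ind}_F(c)\}$ is exactly the set of all even elements or exactly the set of all odd elements of $\mathbb{Z}_{S(K)}$.
   Context: A twisted knot diagram is a virtual knot diagram with finitely many bars on its edges. With $2n$ bars cutting $K$ into edges $e_1,\dots,e_{2n}$ (consecutive along the orientation), $s(e)=u_+(e)+o_-(e)-u_-(e)-o_+(e)$ where $o_\pm(e)$ (resp. $u_\pm(e)$) counts positive/negative crossings at which $e$ is the over- (resp. under-) strand, and $S(K)=\left|\sum_{i=1}^n s(e_{2i-1})-\sum_{i=1}^n s(e_{2i})\right|$ ($S(K)=0$ if no bars); $S(K)$ is always even, so parity in $\mathbb{Z}_{S(K)}$ is well defined. Segments are the pieces between real crossings and bars. A coloring labels segments by elements of $\mathbb{Z}_{S(K)}$ so that at each real crossing, with $x$ the label of the under-strand segment to the right of the over-strand and $y$ the label of the over-strand segment to the right of the under-strand (right with respect to strand orientations), the other under-segment is labeled $x+1$ and the other over-segment $y+1$, and labels on the two sides of a bar are negatives of each other. In the Gauss diagram of $K$ (a circle with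 one chord per real crossing, with the bars marked as points on the circle), each chord $c$ splits the circle into two arcs; since the total number of bars is even, either both arcs contain an even number of bars ($c\in C_e(K)$) or both contain an odd number ($c\in C_o(K)$). *)

(* Twisted knot diagrams are encoded by their Gauss diagram
   with bars: the cyclic sequence of events met when travelling along the
   oriented knot (virtual crossings are invisible). *)
From HB Require Import structures.
From mathcomp Require Import all_boot all_order all_algebra.
Set Implicit Arguments. Unset Strict Implicit. Unset Printing Implicit Defensive.
Import GRing.Theory Num.Theory.
Local Open Scope ring_scope.

Inductive event := Over of nat | Under of nat | Bar.

Definition is_bar (e : event) : bool := if e is Bar then true else false.
Definition is_over (c : nat) (e : event) : bool :=
  if e is Over c' then c' == c else false.
Definition is_under (c : nat) (e : event) : bool :=
  if e is Under c' then c' == c else false.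

Definition wf_gauss (w : seq event) : Prop :=
  forall c, count (is_over c) w = count (is_under c) w /\
            (count (is_over c) w <= 1)%N.

Definition is_crossing (w : seq event) (c : nat) : bool := has (is_over c) w.
Definition over_pos (w : seq event) (c : nat) : nat := find (is_over c) w.
Definition under_pos (w : seq event) (c : nat) : nat := find (is_under c) w.

(* Segments: segment j (j < size w) is the piece of the knot from event j to
   event j+1 (cyclically).  At event j the incoming segment is [prev_seg w j]
   and the outgoing one is j. *)
Definition prev_seg (w : seq event) (j : nat) : nat := ((j + size w).-1 %% size w)%N.

(* Contribution of an event to s(e): sg c = true means c is positive.
   under of positive: +1 (u_+), under of negative: -1 (u_-),
   over of positive: -1 (o_+), over of negative: +1 (o_-). *)
Definition delta (sg : nat -> bool) (e : event) : int :=
  match e with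
  | Over c => if sg c then -1 else 1
  | Under c => if sg c then 1 else -1
  | Bar => 0
  end.

(* (-1)^(number of bars before position j): +1 on edges e_1,e_3,..., -1 on
   e_2,e_4,... (the edge through position 0 is e_1). *)
Definition bar_sign (w : seq event) (j : nat) : int :=
  (-1) ^+ count is_bar (take j w).

(* S(K) = | sum_i s(e_{2i-1}) - sum_i s(e_{2i}) |  (0 if there are no bars,
   which this formula gives automatically). *)
Definition Sval (sg : nat -> bool) (w : seq event) : nat :=
  absz (\sum_(j < size w) bar_sign w j * delta sg (nth Bar w j)).

(* equality in Z_S (Z_0 = Z) *)
Definition eqm (S : nat) (a b : int) : Prop := (a = b %[mod S%:Z])%Z.

(* Colorings by the twisted biquandle (Z_S, a*b = a o b = a+1, f(a) = -a),
   labels represented by integers.  Positive crossing: x = incoming under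
   label, y = outgoing over label; negative crossing: x = outgoing under
   label, y = incoming over label. *)
Definition coloring (sg : nat -> bool) (w : seq event) (F : nat -> int) : Prop :=
  let S := Sval sg w in
  forall j, (j < size w)%N ->
    match nth Bar w j with
    | Bar => eqm S (F j) (- F (prev_seg w j))
    | Over c => if sg c then eqm S (F (prev_seg w j)) (F j + 1)
                else eqm S (F j) (F (prev_seg w j) + 1)
    | Under c => if sg c then eqm S (F j) (F (prev_seg w j) + 1)
                 else eqm S (F (prev_seg w j)) (F j + 1)
    end.

Definition Ind (sg : nat -> bool) (w : seq event) (F : nat -> int) (c : nat) : int :=
  let p := over_pos w c in let q := under_pos w c in
  if sg c then F p - F (prev_seg w q) else F (prev_seg w p) - F q.

Definition bars_between (w : seq event) (c : nat) : nat :=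
  let p := over_pos w c in let q := under_pos w c in
  count is_bar (drop (minn p q).+1 (take (maxn p q) w)).

Definition even_chord (w : seq event) (c : nat) : bool := ~~ odd (bars_between w c).

From mathcomp Require Import all_boot all_order all_algebra.
Import GRing.Theory Num.Theory.
From mathcomp Require Import zify ring.

Set Implicit Arguments.
Unset Strict Implicit.

(* A coloring is determined, modulo S(K), by the label a of the segment ending
   at event 0: walking along the knot, a label is negated at each bar and
   shifted by the contribution of each crossing passage to s(e).  Unrolling
   this gives the label before event k as (-1)^(bars before k) * (a + T_k),
   where T_k is the signed partial sum defining S(K); T_n is 0 modulo S(K), and
   an even number of bars closes the loop, so every a occurs.  Hence
   Ind_F(c) = C + (e_p - e_q) a with e_p, e_q the signs at the two ends of the
   chord of c, and e_q = e_p (-1)^(bars between).  For an even chord the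
   coefficient vanishes; for an odd one it is +-2, and since S(K) is even the
   values C + 2a fill exactly the residues of the parity of C. *)

Local Open Scope ring_scope.

Lemma eqmP S a b : eqm S a b <-> (S%:Z %| a - b)%Z.
Proof. by rewrite /eqm -eqz_mod_dvd; split=> [->|/eqP]. Qed.

Lemma dvdz_eq (d x y : int) : (d %| x)%Z -> x = y -> (d %| y)%Z.
Proof. by move=> dx <-. Qed.

Lemma dvdzN (d x : int) : (d %| x)%Z -> (d %| - x)%Z.
Proof. by rewrite rpredN. Qed.

Lemma dvdzD (d x y : int) : (d %| x)%Z -> (d %| y)%Z -> (d %| x + y)%Z.
Proof. exact: rpredD. Qed.

Lemma dvdzB (d x y : int) : (d %| x)%Z -> (d %| y)%Z -> (d %| x - y)%Z.
Proof. exact: rpredB. Qed.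

Lemma bar_sign_pm w k : bar_sign w k = 1 \/ bar_sign w k = -1.
Proof. by rewrite /bar_sign -signr_odd; case: odd; [right|left]. Qed.

Lemma bar_sign_sqr w k : bar_sign w k * bar_sign w k = 1.
Proof. by rewrite -expr2 sqrr_sign. Qed.

Lemma bar_signS w k : (k < size w)%N ->
  bar_sign w k.+1 = bar_sign w k * (if is_bar (nth Bar w k) then -1 else 1).
Proof.
move=> lt_k; rewrite /bar_sign (take_nth Bar lt_k) -cats1 count_cat /= addn0.
by rewrite exprD; case: is_bar; rewrite ?expr1 ?expr0.
Qed.

Lemma prev_seg0 w : (0 < size w)%N -> prev_seg w 0 = (size w).-1.
Proof. by move=> w_gt0; rewrite /prev_seg add0n modn_small // prednK. Qed.

Lemma prev_segS w k : (k.+1 < size w)%N -> prev_seg w k.+1 = k.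
Proof. by move=> lt_k; rewrite /prev_seg addSn /= modnDr modn_small // ltnW. Qed.

Section StandardColoring.

Variables (sg : nat -> bool) (w : seq event).

Let S := Sval sg w.

Definition pass_event (e : event) (x : int) : int :=
  if is_bar e then - x else x + delta sg e.

Lemma pass_event_congr e (d x y : int) :
  (d %| x - y)%Z -> (d %| pass_event e x - pass_event e y)%Z.
Proof.
rewrite /pass_event; case: is_bar => dxy.
  by eapply (dvdz_eq (dvdzN dxy)); ring.
by eapply (dvdz_eq dxy); ring.
Qed.

Lemma coloringE F : coloring sg w F <->
  forall k, (k < size w)%N ->
    (S %| F k - pass_event (nth Bar w k) (F (prev_seg w k)))%Z.
Proof.
rewrite /coloring /pass_event; split=> colF k /colF; case: nth => [c|c|] /=.
all: try case: (sg c).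
all: rewrite ?eqmP => Sdiv; rewrite ?eqmP.
all: first [ by eapply (dvdz_eq Sdiv); ring
           | by eapply (dvdz_eq (dvdzN Sdiv)); ring ].
Qed.

Definition s_sum (k : nat) : int :=
  \sum_(j < k) bar_sign w j * delta sg (nth Bar w j).

(* The label of segment k.-1, i.e. of the segment entering event k, in the
   coloring whose label on the segment entering event 0 is a. *)
Definition std_label (a : int) (k : nat) : int := bar_sign w k * (a + s_sum k).

Lemma std_label0 a : std_label a 0 = a.
Proof. by rewrite /std_label /s_sum big_ord0 /bar_sign take0 expr0 mul1r addr0. Qed.

Lemma std_labelS a k : (k < size w)%N ->
  std_label a k.+1 = pass_event (nth Bar w k) (std_label a k).
Proof.
move=> lt_k; rewrite /std_label /s_sum big_ord_recr /= -/(s_sum k) bar_signS //.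
have sqr := bar_sign_sqr w k.
rewrite /pass_event; case: nth => [c|c|] /=; last by rewrite mulr0 addr0; ring.
all: by rewrite mulr1 !mulrDr mulrA sqr; ring.
Qed.

Lemma std_label_affine a k : std_label a k = bar_sign w k * a + std_label 0 k.
Proof. by rewrite /std_label; ring. Qed.

Lemma dvd_Sval_s_sum : (S %| s_sum (size w))%Z.
Proof. by rewrite dvdzE /S /Sval /s_sum /= dvdnn. Qed.

Definition follows_std (F : nat -> int) (a : int) : Prop :=
  forall k, (k < size w)%N -> (S %| F k - std_label a k.+1)%Z.

Lemma coloring_follows_std F : coloring sg w F -> follows_std F (F (size w).-1).
Proof.
move/coloringE=> colF; elim=> [|k IHk] lt_k.
  by have := colF 0%N lt_k; rewrite prev_seg0 // std_labelS // std_label0.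
have := colF _ lt_k; rewrite prev_segS // std_labelS // => Sdiv.
have := pass_event_congr (nth Bar w k.+1) (IHk (ltnW lt_k)).
move=> /(dvdzD Sdiv) Sdiv'; eapply (dvdz_eq Sdiv'); ring.
Qed.

Hypothesis even_bars : ~~ odd (count is_bar w).

Lemma std_label_size a : std_label a (size w) = a + s_sum (size w).
Proof.
by rewrite /std_label /bar_sign take_size -signr_odd (negbTE even_bars) mul1r.
Qed.

Lemma follows_std_prev F a : follows_std F a ->
  forall k, (k < size w)%N -> (S %| F (prev_seg w k) - std_label a k)%Z.
Proof.
move=> folF [|k] lt_k; last by rewrite prev_segS //; apply: folF; apply: ltnW.
rewrite prev_seg0 // std_label0; have := folF (size w).-1.
rewrite prednK // std_label_size => /(_ (leqnn _))/(dvdzD dvd_Sval_s_sum) Sdiv'.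
by eapply (dvdz_eq Sdiv'); ring.
Qed.

Lemma follows_std_coloring F a : follows_std F a -> coloring sg w F.
Proof.
move=> folF; apply/coloringE => k lt_k.
have := pass_event_congr (nth Bar w k) (follows_std_prev folF lt_k).
rewrite -std_labelS // => /(dvdzB (folF _ lt_k)) Sdiv'.
by eapply (dvdz_eq Sdiv'); ring.
Qed.

Lemma follows_std_label a : follows_std (fun k => std_label a k.+1) a.
Proof. by move=> k _; rewrite subrr dvdz0. Qed.

Lemma std_coloring a : coloring sg w (fun k => std_label a k.+1).
Proof. exact: follows_std_coloring (follows_std_label a). Qed.

Definition std_Ind (c : nat) (a : int) : int :=
  let p := over_pos w c in let q := under_pos w c in
  if sg c then std_label a p.+1 - std_label a q
  else std_label a p - std_label a q.+1.

Lemma follows_std_Ind F a c :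
  (over_pos w c < size w)%N -> (under_pos w c < size w)%N ->
  follows_std F a -> (S %| Ind sg w F c - std_Ind c a)%Z.
Proof.
move=> lt_p lt_q folF; have folF' := follows_std_prev folF.
rewrite /Ind /std_Ind; case: (sg c).
  by eapply (dvdz_eq (dvdzB (folF _ lt_p) (folF' _ lt_q))); ring.
by eapply (dvdz_eq (dvdzB (folF' _ lt_p) (folF _ lt_q))); ring.
Qed.

End StandardColoring.

Definition over_label (e : event) : option nat := if e is Over c then Some c else None.
Definition under_label (e : event) : option nat := if e is Under c then Some c else None.

Lemma count_over_label c w : count_mem c (pmap over_label w) = count (is_over c) w.
Proof. by elim: w => //= -[c'|c'|] w /= ->. Qed.

Lemma count_under_label c w : count_mem c (pmap under_label w) = count (is_under c) w.
Proof. by elim: w => //= -[c'|c'|] w /= ->. Qed.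

Lemma count_nonbar w :
  count (predC is_bar) w = (size (pmap over_label w) + size (pmap under_label w))%N.
Proof. by elim: w => //= -[c|c|] w /= ->; rewrite ?addnS. Qed.

Lemma count_nonbar_wf w : wf_gauss w ->
  count (predC is_bar) w = (2 * size (pmap over_label w))%N.
Proof.
move=> wf_w; have perm_ou : perm_eq (pmap over_label w) (pmap under_label w).
  by apply/allP => c _ /=; rewrite count_over_label count_under_label (wf_w c).1.
by rewrite count_nonbar -(perm_size perm_ou) mul2n addnn.
Qed.

Lemma s_sum_parity sg w k : (k <= size w)%N ->
  (2 %| s_sum sg w k - (count (predC is_bar) (take k w))%:Z)%Z.
Proof.
elim: k => [|k IHk] le_k; first by rewrite /s_sum big_ord0 take0.
have := IHk (ltnW le_k); rewrite /s_sum big_ord_recr /= -/(s_sum sg w k).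
rewrite (take_nth Bar le_k) -cats1 count_cat /=.
by case: (bar_sign_pm w k) => ->; case: nth => [c|c|] /=; try case: (sg c); lia.
Qed.

Lemma Sval_even sg w : wf_gauss w -> (2 %| (Sval sg w)%:Z)%Z.
Proof.
move=> wf_w; have := @s_sum_parity sg w _ (leqnn _).
rewrite take_size count_nonbar_wf // => two_div.
have : (2 %| s_sum sg w (size w))%Z by lia.
by rewrite !dvdzE.
Qed.

Section Crossing.

Variables (sg : nat -> bool) (w : seq event) (c : nat).
Hypotheses (wf_w : wf_gauss w) (cross_c : is_crossing w c).

Lemma crossing_positions :
  [/\ (over_pos w c < size w)%N, (under_pos w c < size w)%N,
      nth Bar w (over_pos w c) = Over c & nth Bar w (under_pos w c) = Under c].
Proof.
have [over_under _] := wf_w c.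
have has_u : has (is_under c) w by rewrite has_count -over_under -has_count.
have := nth_find Bar cross_c; have := nth_find Bar has_u.
rewrite /over_pos /under_pos => nth_u nth_o.
split; rewrite -?has_find //.
  by move: nth_o; case: nth => //= ? /eqP ->.
by move: nth_u; case: nth => //= ? /eqP ->.
Qed.

Lemma count_bar_take_split m M : (m < M)%N -> (M <= size w)%N ->
  ~~ is_bar (nth Bar w m) ->
  count is_bar (take M w) =
    (count is_bar (take m w) + count is_bar (drop m.+1 (take M w)))%N.
Proof.
move=> lt_mM le_M nbar.
rewrite -{1}(cat_take_drop m (take M w)) count_cat take_takel ?(ltnW lt_mM) //.
by rewrite (drop_nth Bar) ?size_takel // nth_take //= (negbTE nbar).
Qed.

Lemma bar_sign_under_pos :
  bar_sign w (under_pos w c) = bar_sign w (over_pos w c) * (-1) ^+ bars_between w c.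
Proof.
have [lt_p lt_q nth_p nth_q] := crossing_positions.
rewrite /bars_between /bar_sign /=.
case: ltngtP => [lt_pq|lt_qp|eq_pq].
- by rewrite (count_bar_take_split lt_pq (ltnW lt_q)) ?nth_p // exprD.
- rewrite (count_bar_take_split lt_qp (ltnW lt_p)) ?nth_q // exprD -mulrA.
  by rewrite -expr2 sqrr_sign mulr1.
- by move: nth_p; rewrite eq_pq nth_q.
Qed.

Lemma std_Ind_affine a :
  std_Ind sg w c a =
    std_Ind sg w c 0 + bar_sign w (over_pos w c) * (1 - (-1) ^+ bars_between w c) * a.
Proof.
have [lt_p lt_q nth_p nth_q] := crossing_positions.
rewrite /std_Ind /= !(std_label_affine sg w a) !bar_signS // nth_p nth_q /=.
by rewrite bar_sign_under_pos; case: (sg c); ring.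
Qed.

Hypothesis even_bars : ~~ odd (count is_bar w).

Lemma Ind_coloring F : coloring sg w F ->
  (Sval sg w %| Ind sg w F c - (std_Ind sg w c 0 +
     bar_sign w (over_pos w c) * (1 - (-1) ^+ bars_between w c) * F (size w).-1))%Z.
Proof.
have [lt_p lt_q _ _] := crossing_positions.
by move=> /coloring_follows_std folF; rewrite -std_Ind_affine; apply: follows_std_Ind.
Qed.

Lemma Ind_even_chord F : even_chord w c -> coloring sg w F ->
  (Sval sg w %| Ind sg w F c - std_Ind sg w c 0)%Z.
Proof.
by move=> /negbTE even_c /Ind_coloring; rewrite -signr_odd even_c subrr mulr0 mul0r addr0.
Qed.

Lemma Ind_values_odd_chord z : ~~ even_chord w c ->
  (exists F, coloring sg w F /\ eqm (Sval sg w) (Ind sg w F c) z) <->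
  (2 %| z - std_Ind sg w c 0)%Z.
Proof.
rewrite /even_chord negbK => odd_c.
have coef2 : 1 - (-1) ^+ bars_between w c = 2 :> int by rewrite -signr_odd odd_c.
set e := bar_sign w (over_pos w c); set C := std_Ind sg w c 0.
split=> [[F [/Ind_coloring]]|two_div].
  rewrite coef2 => IndF /eqmP /(dvdzB IndF).
  move=> /(dvdz_trans (Sval_even sg wf_w)); rewrite -mulrA.
  by generalize (e * (2 * F (size w).-1)); lia.
set m := ((z - C) %/ 2)%Z.
have shift : e * 2 * (e * m) = z - C.
  rewrite -(divzK two_div) -/m -[RHS]mul1r -(bar_sign_sqr w (over_pos w c)) -/e.
  by ring.
exists (fun k => std_label sg w (e * m) k.+1); split; first exact: std_coloring.
have [lt_p lt_q _ _] := crossing_positions.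
have := follows_std_Ind even_bars lt_p lt_q (follows_std_label sg (e * m)).
rewrite std_Ind_affine coef2 shift => Sdiv; apply/eqmP.
by eapply (dvdz_eq Sdiv); ring.
Qed.

End Crossing.

Theorem lemma7p7 (w : seq event) (sg : nat -> bool) (c : nat) :
  wf_gauss w -> ~~ odd (count is_bar w) -> is_crossing w c ->
  (even_chord w c ->
     forall F G : nat -> int, coloring sg w F -> coloring sg w G ->
       eqm (Sval sg w) (Ind sg w F c) (Ind sg w G c)) /\
  (~~ even_chord w c ->
     (forall z : int, (exists F, coloring sg w F /\ eqm (Sval sg w) (Ind sg w F c) z)
                      <-> (2 %| z)%Z) \/
     (forall z : int, (exists F, coloring sg w F /\ eqm (Sval sg w) (Ind sg w F c) z)
                      <-> ~~ (2 %| z)%Z)).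
Proof.
move=> wf_w even_bars cross_c; split.
  move=> even_c F G colF colG; apply/eqmP.
  have IndF := Ind_even_chord wf_w cross_c even_bars even_c colF.
  have IndG := Ind_even_chord wf_w cross_c even_bars even_c colG.
  by eapply (dvdz_eq (dvdzB IndF IndG)); ring.
move=> odd_c; have values z := Ind_values_odd_chord sg wf_w cross_c even_bars z odd_c.
by case: (boolP (2 %| std_Ind sg w c 0)%Z) => two_C; [left|right] => z;
  rewrite values; move: two_C; generalize (std_Ind sg w c 0); lia.
Qed.
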